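(* Let $f=\frac1n\sum_{i=1}^n f_i$ with $f_i:\mathbb{R}^d\to\mathbb{R}$ differentiable and let $x^*$ be the minimizer of $f$. Let $\mathcal G$ be a partition of $[n]$ into sets of size $\tau$, and let $S$ be a random set with $\Pr(S=C)=p_C>0$ for $C\in\mathcal G$, $\sum_{C\in\mathcal G}p_C=1$. Assume that for every $C\in\mathcal G$ the function $f_C=\frac{1}{|C|}\sum_{i\in C}f_i$ is $L_C$-smooth and $\mu$-strongly convex ($\mu>0$). Let $\{x^k,\mathbf J^k\}$ be the iterates of minibatch SAGA with sampling $S$ and stepsize $\alpha$, and let $S$ also denote a copy of the sampling independent of the iterates. Define the stochastic Lyapunov function $$\Psi_S^k=\|x^k-x^*\|_2^2+2\sigma_S\alpha\Big\|\tfrac1n\mathbf J^ke-\nabla f_{S,\mathbf J^k}(x^* )\Big\|_2^2,\qquad \sigma_S=\frac{n}{4\tau L_S}.$$ If $\alpha\le\min_{C\in\mathcal G}\frac{p_C}{\mu+4L_C\tau/n}$, then $\mathbb{E}[\Psi_S^k]\le(1-\mu\alpha)^k\,\mathbb{E}[\Psi_S^0]$. Consequently, if $\alpha$ equals this upper bound, then $k\ge\max_{C\in\mathcal G}\left\{\frac1{p_C}+\frac{4L_C}{\mu}\frac{\tau}{np_C}\right\}\log\frac1\epsilon$ implies $\mathbb{E}[\Psi_S^k]\le\epsilon\,\mathbb{E}[\Psi_S^0]$.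
   Context: $e\in\mathbb{R}^n$ is the all-ones vector, $\mathbf J_{:i}$ the $i$-th column of $\mathbf J\in\mathbb{R}^{d\times n}$. For $C\in\mathcal G$ and $\mathbf J\in\mathbb{R}^{d\times n}$, $\nabla f_{C,\mathbf J}(x)=\frac1n\mathbf Je+\frac{1}{np_C}\sum_{i\in C}(\nabla f_i(x)-\mathbf J_{:i})$. Minibatch SAGA (JacSketch with $\mathbf W=\mathbf I$, sketch $\mathbf S=\mathbf I_S$, $\theta=1/p_S$): given $x^0\in\mathbb{R}^d$, $\mathbf J^0\in\mathbb{R}^{d\times n}$, for $k=0,1,\dots$ sample $S_k$ (independent copy of $S$), set $g^k=\frac1n\mathbf J^ke+\frac1{np_{S_k}}\sum_{i\in S_k}(\nabla f_i(x^k)-\mathbf J^k_{:i})$, $\mathbf J^{k+1}_{:i}=\nabla f_i(x^k)$ for $i\in S_k$ and $\mathbf J^{k+1}_{:i}=\mathbf J^k_{:i}$ otherwise, and $x^{k+1}=x^k-\alpha g^k$. $\mathbb{E}$ is over all randomness (iterates and $S$). *)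

From HB Require Import structures.
From mathcomp Require Import all_boot all_order all_algebra.
From mathcomp Require Import all_classical all_reals all_analysis.
Set Implicit Arguments. Unset Strict Implicit. Unset Printing Implicit Defensive.
Import Order.TTheory GRing.Theory Num.Theory.
Import numFieldNormedType.Exports.
Local Open Scope ring_scope.

Section Defs.
Variable R : realType.
Variables (d n : nat).
Notation vec := 'rV[R]_d.

Definition dotv (u v : vec) : R := (u *m v^T) 0 0.
Definition sqnorm (u : vec) : R := dotv u u.

Definition is_gradient (f : vec -> R) (g : vec -> vec) : Prop :=
  forall x, differentiable f x /\ ('d f x : vec -> R) = (fun h => dotv (g x) h).

Definition smooth_with (L : R) (g : vec -> vec) : Prop :=
  0 <= L /\ forall x y, sqnorm (g x - g y) <= L ^+ 2 * sqnorm (x - y).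

Definition strongly_convex_with (mu : R) (f : vec -> R) (g : vec -> vec) : Prop :=
  forall x y, f x + dotv (g x) (y - x) + mu / 2 * sqnorm (y - x) <= f y.

Variables (f : 'I_n -> vec -> R) (grad : 'I_n -> vec -> vec).

Definition fsum (x : vec) : R := n%:R^-1 * \sum_(i < n) f i x.

Definition fC (C : {set 'I_n}) (x : vec) : R := #|C|%:R^-1 * \sum_(i in C) f i x.
Definition gradC (C : {set 'I_n}) (x : vec) : vec :=
  #|C|%:R^-1 *: \sum_(i in C) grad i x.

(* Jacobian estimate J : columns J_{:i} in R^d, stored as J i. *)
Definition Jac := 'I_n -> vec.

Definition Jmean (J : Jac) : vec := n%:R^-1 *: \sum_(i < n) J i.

Definition gradCJ (p : {set 'I_n} -> R) (C : {set 'I_n}) (J : Jac) (x : vec) : vec :=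
  Jmean J + (n%:R * p C)^-1 *: \sum_(i in C) (grad i x - J i).

Definition saga_step (p : {set 'I_n} -> R) (alpha : R) (st : vec * Jac)
    (C : {set 'I_n}) : vec * Jac :=
  let: (x, J) := st in
  (x - alpha *: gradCJ p C J x, fun i => if i \in C then grad i x else J i).

Definition saga_iter (p : {set 'I_n} -> R) (alpha : R) (x0 : vec) (J0 : Jac)
    (s : seq {set 'I_n}) : vec * Jac :=
  foldl (saga_step p alpha) (x0, J0) s.

Definition Psi (p L : {set 'I_n} -> R) (tau : nat) (alpha : R) (xstar : vec)
    (C : {set 'I_n}) (st : vec * Jac) : R :=
  let sigma := n%:R / (4 * tau%:R * L C) in
  sqnorm (st.1 - xstar) + 2 * sigma * alpha * sqnorm (Jmean st.2 - gradCJ p C st.2 xstar).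

(* E[Psi_S^k]: expectation over i.i.d. S_0,...,S_{k-1} (the iterates) and an
   independent copy S, each with law P(S = C) = p_C for C in G. *)
Definition EPsi (G : {set {set 'I_n}}) (p L : {set 'I_n} -> R) (tau : nat)
    (alpha : R) (xstar : vec) (x0 : vec) (J0 : Jac) (k : nat) : R :=
  \sum_(s : k.-tuple {set 'I_n} | all (fun C => C \in G) s)
    \sum_(C in G)
      (\prod_(j < k) p (tnth s j)) * p C *
      Psi p L tau alpha xstar C (saga_iter p alpha x0 J0 s).

End Defs.

(* Write e = x - xstar and, for a block C, u_C = sum_{i in C} (grad f_i(x) - grad f_i(xstar))
   and delta_C = sum_{i in C} (J_i - grad f_i(xstar)).  As sum_i grad f_i(xstar) = 0,
   averaging Psi_S over S gives |e|^2 + sum_C p_C w_C |delta_C|^2, w_C = 2 sigma_C alpha/(n p_C)^2.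
   A SAGA step is unbiased, its second moment is bounded by Young's inequality, and sampling C
   replaces delta_C by u_C.  Strong convexity of f_C bounds <u_C, e> from below by
   tau (D_C + mu/2 |e|^2), D_C the Bregman divergence of f_C at xstar, and co-coercivity of
   the gradient of the smooth convex f_C bounds |u_C|^2 by 2 tau^2 L_C D_C.  Under the stepsize
   condition these terms combine block by block into a contraction of the averaged Lyapunov
   function by 1 - mu alpha, which iterates over the independent samples; the complexity
   bound then follows from 1 - q <= exp(-q). *)

From HB Require Import structures.
From mathcomp Require Import all_boot all_order all_algebra.
From mathcomp Require Import all_classical all_reals all_analysis.
From mathcomp Require Import ring lra.
Import Order.TTheory GRing.Theory Num.Theory.
Import numFieldNormedType.Exports.
Local Open Scope ring_scope.
Set Implicit Arguments. Unset Strict Implicit. Unset Printing Implicit Defensive.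

Section Euclidean.
Variables (R : realType) (d : nat).
Notation vec := 'rV[R]_d.
Implicit Types (u v w : vec) (a : R).

Lemma dotvC u v : dotv u v = dotv v u.
Proof. by rewrite /dotv -[u *m v^T]trmxK trmx_mul trmxK mxE. Qed.

Lemma dotvDl u w v : dotv (u + w) v = dotv u v + dotv w v.
Proof. by rewrite /dotv mulmxDl mxE. Qed.

Lemma dotvZl a u v : dotv (a *: u) v = a * dotv u v.
Proof. by rewrite /dotv -scalemxAl mxE. Qed.

Lemma dotvNl u v : dotv (- u) v = - dotv u v.
Proof. by rewrite /dotv mulNmx mxE. Qed.

Lemma dotvBl u w v : dotv (u - w) v = dotv u v - dotv w v.
Proof. by rewrite dotvDl dotvNl. Qed.

Lemma dotv0l v : dotv 0 v = 0.
Proof. by rewrite /dotv mul0mx mxE. Qed.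

Lemma dotv_suml (I : Type) (r : seq I) (P : pred I) (F : I -> vec) v :
  dotv (\sum_(i <- r | P i) F i) v = \sum_(i <- r | P i) dotv (F i) v.
Proof. by rewrite /dotv mulmx_suml summxE. Qed.

Lemma dotvDr u w v : dotv v (u + w) = dotv v u + dotv v w.
Proof. by rewrite dotvC dotvDl !(dotvC v). Qed.

Lemma dotvZr a u v : dotv v (a *: u) = a * dotv v u.
Proof. by rewrite dotvC dotvZl dotvC. Qed.

Lemma dotvNr u v : dotv v (- u) = - dotv v u.
Proof. by rewrite dotvC dotvNl dotvC. Qed.

Lemma dotvBr u w v : dotv v (u - w) = dotv v u - dotv v w.
Proof. by rewrite dotvDr dotvNr. Qed.

Lemma sqnormE u : sqnorm u = \sum_j u 0 j ^+ 2.
Proof. by rewrite /sqnorm /dotv !mxE; apply: eq_bigr => j _; rewrite mxE expr2. Qed.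

Lemma sqnorm_ge0 u : 0 <= sqnorm u.
Proof. by rewrite sqnormE; apply: sumr_ge0 => j _; apply: sqr_ge0. Qed.

Lemma sqnorm_eq0 u : (sqnorm u == 0) = (u == 0).
Proof.
apply/idP/eqP => [|->]; last by rewrite /sqnorm dotv0l.
rewrite sqnormE psumr_eq0 => [/allP u0|j _]; last exact: sqr_ge0.
by apply/rowP => j; have /= := u0 j (mem_index_enum j); rewrite mxE sqrf_eq0 => /eqP.
Qed.

Lemma sqnorm_le0 u : (sqnorm u <= 0) = (u == 0).
Proof. by rewrite -sqnorm_eq0 eq_le sqnorm_ge0 andbT. Qed.

Lemma sqnormD u v : sqnorm (u + v) = sqnorm u + 2 * dotv u v + sqnorm v.
Proof. by rewrite /sqnorm dotvDl !dotvDr (dotvC v u); ring. Qed.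

Lemma sqnormB u v : sqnorm (u - v) = sqnorm u - 2 * dotv u v + sqnorm v.
Proof. by rewrite /sqnorm dotvBl !dotvBr (dotvC v u); ring. Qed.

Lemma sqnormZ a u : sqnorm (a *: u) = a ^+ 2 * sqnorm u.
Proof. by rewrite /sqnorm dotvZl dotvZr; ring. Qed.

Lemma sqnormN u : sqnorm (- u) = sqnorm u.
Proof. by rewrite /sqnorm dotvNl dotvNr opprK. Qed.

Lemma sqnormBC u v : sqnorm (u - v) = sqnorm (v - u).
Proof. by rewrite -sqnormN opprB. Qed.

Lemma sqnormD_le u v : sqnorm (u + v) <= 2 * sqnorm u + 2 * sqnorm v.
Proof. by have := sqnorm_ge0 (u - v); rewrite sqnormB sqnormD; lra. Qed.

Lemma dotv_le_sqnorm u v (k : R) : 0 <= k -> sqnorm u <= k ^+ 2 * sqnorm v ->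
  dotv u v <= k * sqnorm v.
Proof.
rewrite le_eqVlt => /predU1P[<- | k_gt0] uv.
  by move: uv; rewrite expr0n mul0r sqnorm_le0 => /eqP->; rewrite dotv0l.
have := sqnorm_ge0 (u - k *: v); rewrite sqnormB sqnormZ dotvZr => uk.
by rewrite -subr_ge0 -(pmulr_rge0 _ k_gt0); nra.
Qed.

End Euclidean.

Section Gradients.
Variables (R : realType) (d : nat).
Notation vec := 'rV[R]_d.
Implicit Types (F : vec -> R) (g : vec -> vec).

Lemma is_gradientD F1 F2 g1 g2 : is_gradient F1 g1 -> is_gradient F2 g2 ->
  is_gradient (F1 + F2) (g1 + g2).
Proof.
move=> h1 h2 x; have [d1 e1] := h1 x; have [d2 e2] := h2 x.
split; first exact: differentiableD.
by rewrite diffD // e1 e2; apply/funext => h /=; rewrite dotvDl.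
Qed.

Lemma is_gradient0 : is_gradient (0 : vec -> R) 0.
Proof.
move=> x; split; first exact: differentiable_cst.
by rewrite diff_cst; apply/funext => h /=; rewrite dotv0l.
Qed.

Lemma is_gradient_sum (I : Type) (r : seq I) (P : pred I) (F : I -> vec -> R) G :
  (forall i, P i -> is_gradient (F i) (G i)) ->
  is_gradient (\sum_(i <- r | P i) F i) (\sum_(i <- r | P i) G i).
Proof.
move=> hF; apply: big_ind2 => //; first exact: is_gradient0.
by move=> F1 g1 F2 g2; apply: is_gradientD.
Qed.

Lemma is_gradientZ F g (c : R) : is_gradient F g -> is_gradient (c *: F) (c *: g).
Proof.
move=> h x; have [dF eF] := h x.
split; first exact: differentiableZ.
by rewrite diffZ // eF; apply/funext => k /=; rewrite dotvZl.
Qed.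

Lemma is_derive_line F g (x v : vec) (t : R) : is_gradient F g ->
  is_derive t 1 (fun s : R => F (s *: v + x)) (dotv (g (t *: v + x)) v).
Proof.
move=> hg; have [dF eF] := hg (t *: v + x).
have dline : is_diff t ((fun s : R => s *: v) + cst x) ((fun h : R => h *: v) + 0).
  exact: is_diffD.
have dF' : is_diff (t *: v + x) F (fun h => dotv (g (t *: v + x)) h) by apply: DiffDef.
have dcomp := is_diff_comp dline dF'.
apply: DeriveDef; first exact/diff_derivable/ex_diff.
by rewrite deriveE ?diff_val /= ?fctE ?scale1r ?addr0 //; apply: ex_diff.
Qed.

End Gradients.

Section Smooth.
Variables (R : realType) (d : nat).
Notation vec := 'rV[R]_d.
Variables (F : vec -> R) (g : vec -> vec).
Hypothesis hg : is_gradient F g.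

Lemma smooth_descent L x y : smooth_with L g ->
  F y <= F x + dotv (g x) (y - x) + L / 2 * sqnorm (y - x).
Proof.
move=> [L_ge0 hL]; set v := y - x; set c1 := dotv (g x) v; set c2 := L / 2 * sqnorm v.
(* phi s = F (s v + x) - c1 s - c2 s^2 has a nonpositive slope on [0, 1]. *)
pose phi := (fun s : R => F (s *: v + x)) - c1 \*: @id R - c2 \*: (@id R * @id R).
have dphi (t : R) : is_derive t 1 phi
    (dotv (g (t *: v + x)) v - c1 *: 1 - c2 *: (t *: 1 + t *: 1)).
  by apply: is_deriveB; apply: is_deriveB; exact: is_derive_line.
have phi_cont :=
  @derivable_within_continuous _ _ phi `[0, 1]%R (fun t _ => @ex_derive _ _ _ _ _ _ _ (dphi t)).
have [c /itvP c01 phi10] := MVT ltr01 (fun t _ => dphi t) phi_cont.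
have slope_le : dotv (g (c *: v + x)) v - c1 <= L * c * sqnorm v.
  rewrite /c1 -dotvBl; apply: dotv_le_sqnorm; first by rewrite mulr_ge0 ?c01.
  by move: (hL (c *: v + x) x); rewrite addrK sqnormZ exprMn mulrA.
have : phi 1 - phi 0 <= 0.
  rewrite phi10 subr0 mulr1 /c2; rewrite /GRing.scale /= !mulr1; nra.
by rewrite /phi !fctE /= scale1r scale0r add0r addrNK /GRing.scale /=; lra.
Qed.

Lemma smooth_convex_cocoercive L x y : smooth_with L g ->
  (forall a b, F a + dotv (g a) (b - a) <= F b) ->
  sqnorm (g x - g y) <= 2 * L * (F x - F y - dotv (g y) (x - y)).
Proof.
move=> hs hconv; have [L_ge0 hL] := hs; set w := g x - g y.
have [L_eq0|L_neq0] := eqVneq L 0.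
  by move: (hL x y); rewrite -/w L_eq0 expr2 !(mul0r, mulr0).
have L_gt0 : 0 < L by rewrite lt_def L_neq0.
(* Compare F at the gradient step z = x - w / L from x (descent) and from y (convexity). *)
set z := x - L^-1 *: w.
have up := smooth_descent x z hs.
have low := hconv y z.
rewrite (_ : z - x = - (L^-1 *: w)) ?sqnormN ?sqnormZ ?dotvNr ?dotvZr in up;
  last by rewrite /z addrAC subrr add0r.
rewrite (_ : z - y = (x - y) - L^-1 *: w) ?dotvBr ?dotvZr in low;
  last by rewrite /z addrAC.
have gw : dotv (g x) w - dotv (g y) w = sqnorm w by rewrite -dotvBl.
rewrite (_ : L / 2 * (L^-1 ^+ 2 * sqnorm w) = L^-1 * sqnorm w - sqnorm w / (2 * L)) in up;
  last by field.
have key : sqnorm w / (2 * L) <= F x - F y - dotv (g y) (x - y).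
  rewrite -[dotv (g x) w](subrK (dotv (g y) w)) gw mulrDr in up.
  by rewrite dotvBr; lra.
by rewrite -ler_pdivrMl ?mulr_gt0 // mulrC.
Qed.

Lemma gradient_eq0_at_min xs : (forall x, F xs <= F x) -> g xs = 0.
Proof.
move=> xs_min; set v := g xs.
have dline (t : R) := is_derive_line xs v t hg.
have d0 : is_derive (0 : R) 1 (fun s : R => F (s *: v + xs)) 0.
  apply: (@derive1_at_min _ _ (-1) 1).
  - lra.
  - by move=> t _; apply: @ex_derive _ _ _ _ _ _ _ (dline t).
  - by rewrite in_itv /= ltrN10 ltr01.
  - by move=> t _; rewrite scale0r add0r.
have := @derive_val _ _ _ _ _ _ _ (dline 0); rewrite (@derive_val _ _ _ _ _ _ _ d0) scale0r add0r.
by move/esym/eqP; rewrite sqnorm_eq0 => /eqP.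
Qed.

End Smooth.

Lemma smooth0_strongly_convex_trivial (R : realType) d (F : 'rV[R]_d -> R)
    (g : 'rV[R]_d -> 'rV[R]_d) (mu : R) :
  0 < mu -> smooth_with 0 g -> strongly_convex_with mu F g -> forall v : 'rV[R]_d, v = 0.
Proof.
move=> mu_gt0 [_ hL] hconv v.
have g_cst : g v = g 0.
  by apply/eqP; rewrite -subr_eq0 -sqnorm_le0; move: (hL v 0); rewrite expr2 !mul0r.
have := hconv 0 v; have := hconv v 0.
rewrite g_cst sqnormBC -(opprB v 0) dotvNr subr0 => h1 h2.
by apply/eqP; rewrite -sqnorm_le0 -(pmulr_rle0 _ mu_gt0); lra.
Qed.

Section Averages.
Variables (R : realType) (d : nat) (T : finType) (G : {set T}) (p : T -> R).
Notation vec := 'rV[R]_d.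
Hypothesis p_ge0 : forall C, C \in G -> 0 <= p C.
Hypothesis p_sum1 : \sum_(C in G) p C = 1.

Lemma mean_cst (c : R) : \sum_(C in G) p C * c = c.
Proof. by rewrite -mulr_suml p_sum1 mul1r. Qed.

Lemma mean_sqnormB (e : vec) (a : R) (X : T -> vec) :
  \sum_(C in G) p C * sqnorm (e - a *: X C) =
  sqnorm e - 2 * a * dotv (\sum_(C in G) p C *: X C) e
  + a ^+ 2 * \sum_(C in G) p C * sqnorm (X C).
Proof.
under eq_bigr do rewrite sqnormB sqnormZ dotvZr (dotvC e) !mulrDr mulrN.
rewrite !big_split /= sumrN mean_cst dotv_suml !mulr_sumr.
by congr (_ - _ + _); apply: eq_bigr => C _; rewrite ?dotvZl; ring.
Qed.

Lemma variance_le_second_moment (X : T -> vec) :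
  \sum_(C in G) p C * sqnorm (X C - \sum_(C' in G) p C' *: X C') <=
  \sum_(C in G) p C * sqnorm (X C).
Proof.
set m := \sum_(C' in G) p C' *: X C'.
under eq_bigr do rewrite sqnormB !mulrDr mulrN.
rewrite !big_split /= sumrN mean_cst.
have -> : \sum_(C in G) p C * (2 * dotv (X C) m) = 2 * sqnorm m.
  rewrite /sqnorm {2}/m dotv_suml mulr_sumr; apply: eq_bigr => C _.
  by rewrite dotvZl; ring.
by have := sqnorm_ge0 m; lra.
Qed.

Lemma mean_update (w U D : T -> R) (h : T -> T -> R) :
  (forall C C', C \in G -> C' \in G -> h C' C = if C == C' then U C else D C) ->
  \sum_(C' in G) p C' * \sum_(C in G) w C * h C' C =
  \sum_(C in G) w C * (p C * U C + (1 - p C) * D C).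
Proof.
move=> hE; under eq_bigr do rewrite mulr_sumr.
rewrite exchange_big /=; apply: eq_bigr => C CG.
under eq_bigr do rewrite mulrCA; rewrite -mulr_sumr; congr (_ * _).
rewrite (bigD1 C) //= hE // eqxx; congr (_ + _).
rewrite (eq_bigr (fun C' => p C' * D C)); last first.
  by move=> C' /andP[C'G C'C]; rewrite hE // eq_sym (negbTE C'C).
by rewrite -mulr_suml; move: p_sum1; rewrite (bigD1 C) //= => <-; rewrite addrC addrK.
Qed.

(* The estimator is unbiased; Young's inequality and the variance bound
   control its second moment. *)
Lemma saga_mean_sqnorm_le (k : T -> R) (c : R) (u dl : T -> vec) (e : vec) (a : R) :
  (forall C, C \in G -> p C * k C = c) ->
  \sum_(C in G) p C * sqnorm (e - a *: (c *: \sum_(C' in G) dl C' + k C *: (u C - dl C)))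
  <= sqnorm e - 2 * a * c * \sum_(C in G) dotv (u C) e
     + 2 * a ^+ 2 * \sum_(C in G) p C * k C ^+ 2 * (sqnorm (u C) + sqnorm (dl C)).
Proof.
move=> pk; set m := c *: \sum_(C' in G) dl C'.
have m_mean : m = \sum_(C in G) p C *: (k C *: dl C).
  by rewrite /m scaler_sumr; apply: eq_bigr => C CG; rewrite scalerA pk.
have unbiased : \sum_(C in G) p C *: (m + k C *: (u C - dl C)) = c *: \sum_(C in G) u C.
  rewrite (eq_bigr (fun C => p C *: m + c *: (u C - dl C))); last first.
    by move=> C CG; rewrite scalerDr [p C *: (_ *: _)]scalerA pk.
  by rewrite big_split /= -scaler_suml p_sum1 scale1r -scaler_sumr sumrB scalerBr addrC subrK.
have young C : C \in G -> p C * sqnorm (m + k C *: (u C - dl C)) <=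
    2 * (p C * k C ^+ 2 * sqnorm (u C)) + 2 * (p C * sqnorm (k C *: dl C - m)).
  move=> CG; rewrite sqnormBC -mulrA -sqnormZ.
  have -> : m + k C *: (u C - dl C) = k C *: u C + (m - k C *: dl C).
    by rewrite scalerBr addrCA.
  by have := sqnormD_le (k C *: u C) (m - k C *: dl C); have := p_ge0 CG; nra.
have variance := variance_le_second_moment (fun C => k C *: dl C).
rewrite -m_mean in variance.
have second : \sum_(C in G) p C * sqnorm (m + k C *: (u C - dl C)) <=
    2 * \sum_(C in G) p C * k C ^+ 2 * (sqnorm (u C) + sqnorm (dl C)).
  apply: le_trans (ler_sum _ young) _.
  rewrite big_split /= -!mulr_sumr.
  under [X in _ <= 2 * X]eq_bigr do rewrite mulrDr.
  rewrite big_split /= mulrDr lerD2l ler_pM2l //.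
  by apply: le_trans variance _; apply: ler_sum => C _; rewrite sqnormZ mulrA.
rewrite mean_sqnormB unbiased dotvZl dotv_suml.
by have := ler_wpM2l (sqr_ge0 a) second; rewrite mulrA; lra.
Qed.

End Averages.

Section Scalars.
Variable R : realType.

(* The share of one block in the one-step bound, with r = |e|^2, B = D_C, U = |u_C|^2 and
   D = |delta_C|^2 in the notation above. *)
Lemma block_contraction (a mu p tau nn sig r B U D : R) :
  0 < a -> 0 < p -> 0 < nn ->
  U * (a + sig * p) <= nn * p * tau * B ->
  D * (a - sig * p + sig * mu * a) <= 0 ->
  tau / nn * r - 2 * a * nn^-1 * (tau * (B + mu / 2 * r))
  + 2 * a ^+ 2 * (p * (nn * p)^-1 ^+ 2 * (U + D))
  + p * (2 * sig * a * (nn * p)^-1 ^+ 2) * (p * U + (1 - p) * D)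
  <= (1 - mu * a) * (tau / nn * r + p * (2 * sig * a * (nn * p)^-1 ^+ 2) * D).
Proof.
move=> a_gt0 p_gt0 nn_gt0 hU hD; set K := (nn * p)^-1.
have pK2_gt0 : 0 < p * K ^+ 2 by rewrite mulr_gt0 ?exprn_gt0 ?invr_gt0 ?mulr_gt0.
have key : p * K ^+ 2 * (U * (a + sig * p) + D * (a - sig * p + sig * mu * a))
    <= tau / nn * B.
  have -> : tau / nn * B = p * K ^+ 2 * (nn * p * tau * B).
    by rewrite /K; field; rewrite !gt_eqF.
  by rewrite ler_pM2l //; lra.
rewrite -subr_ge0 (_ : _ - _ = 2 * a * (tau / nn * B
    - p * K ^+ 2 * (U * (a + sig * p) + D * (a - sig * p + sig * mu * a)))).
  by rewrite pmulr_rge0 ?mulr_gt0 // subr_ge0.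
by rewrite /K; field; rewrite !gt_eqF.
Qed.

Lemma geometric_le_eps (q M eps : R) (k : nat) :
  0 < q <= 1 -> q^-1 <= M -> 0 < eps -> M * ln eps^-1 <= k%:R ->
  (1 - q) ^+ k <= eps.
Proof.
move=> /andP[q_gt0 q_le1] qM eps_gt0 hk.
have [eps_ge1|eps_lt1] := leP 1 eps.
  by apply: le_trans eps_ge1; rewrite exprn_ile1 //; lra.
have ln_ge0 : 0 <= ln eps^-1 by rewrite ln_ge0 // invf_ge1 // ltW.
have ln_le : ln eps^-1 <= k%:R * q.
  by rewrite -ler_pdivrMr // mulrC; apply: le_trans hk; apply: ler_wpM2r.
apply: (@le_trans _ _ (expR (- q) ^+ k)).
  by rewrite lerXn2r ?nnegrE ?expR_ge0 ?expR_ge1Dx //; lra.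
rewrite -expRM_natl -[X in _ <= X](lnK eps_gt0) ler_expR.
by rewrite lnV ?posrE // in ln_le; lra.
Qed.

End Scalars.

Lemma big_tuple_cons (V : nmodType) (T : finType) (A : {set T}) k
    (F : k.+1.-tuple T -> V) :
  \sum_(s : k.+1.-tuple T | all (fun C => C \in A) s) F s =
  \sum_(C in A) \sum_(s : k.-tuple T | all (fun C => C \in A) s) F [tuple of C :: s].
Proof.
rewrite pair_big_dep /= (reindex (fun q : T * k.-tuple T => [tuple of q.1 :: q.2])) /=.
  by apply: eq_bigl => -[C s].
exists (fun t : k.+1.-tuple T => (thead t, [tuple of behead t])).
  by move=> [C s] _; congr (_, _); apply: val_inj.
by move=> t _; rewrite -tuple_eta.
Qed.

Section MinibatchSAGA.
Variables (R : realType) (d n tau : nat) (f : 'I_n -> 'rV[R]_d -> R)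
  (grad : 'I_n -> 'rV[R]_d -> 'rV[R]_d) (xstar : 'rV[R]_d)
  (G : {set {set 'I_n}}) (p L : {set 'I_n} -> R) (mu alpha : R).
Notation vec := 'rV[R]_d.
Hypothesis grad_f : forall i, is_gradient (f i) (grad i).
Hypothesis xstar_min : forall x, fsum f xstar <= fsum f x.
Hypothesis G_partition : finset.partition G [set: 'I_n].
Hypothesis G_card : forall C, C \in G -> #|C| = tau.
Hypothesis p_gt0 : forall C, C \in G -> 0 < p C.
Hypothesis p_sum1 : \sum_(C in G) p C = 1.
Hypothesis mu_gt0 : 0 < mu.
Hypothesis fC_smooth : forall C, C \in G -> smooth_with (L C) (gradC grad C).
Hypothesis fC_strongly_convex :
  forall C, C \in G -> strongly_convex_with mu (fC f C) (gradC grad C).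
Hypothesis alpha_gt0 : 0 < alpha.
Hypothesis alpha_le : forall C, C \in G -> alpha <= p C / (mu + 4 * L C * tau%:R / n%:R).

Lemma exists_block : exists C, C \in G.
Proof.
have [G0|[C CG]] := set_0Vmem G; last by exists C.
by move: p_sum1; rewrite G0 big_set0 => /eqP; rewrite eq_sym oner_eq0.
Qed.

Lemma block_neq0 C : C \in G -> C != finset.set0.
Proof. by case/and3P: G_partition => _ _ G0 CG; apply: contraNneq G0 => <-. Qed.

Lemma n_gt0 : 0 < n%:R :> R.
Proof.
have [C /block_neq0/set0Pn[i _]] := exists_block.
by rewrite ltr0n (leq_ltn_trans (leq0n i) (ltn_ord i)).
Qed.

Lemma tau_gt0 : 0 < tau%:R :> R.
Proof. by have [C CG] := exists_block; rewrite -(G_card CG) ltr0n card_gt0 block_neq0. Qed.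

Lemma sum_block_size : \sum_(C in G) tau%:R = n%:R :> R.
Proof.
have := card_partition G_partition; rewrite cardsT card_ord => n_eq.
by rewrite [in RHS]n_eq natr_sum; apply: eq_bigr => C CG; rewrite G_card.
Qed.

Lemma sum_by_blocks (F : 'I_n -> vec) : \sum_(i < n) F i = \sum_(C in G) \sum_(i in C) F i.
Proof.
case/and3P: G_partition => /eqP G_cover G_triv _.
by rewrite -(finset.big_trivIset (E := F) G G_triv) G_cover; apply: eq_bigl => i; rewrite inE.
Qed.

Lemma block_disjoint C C' i : C \in G -> C' \in G -> C != C' -> i \in C -> i \notin C'.
Proof.
case/and3P: G_partition => _ /finset.trivIsetP G_triv _ CG C'G CC' iC.
by rewrite (disjointFr (G_triv C C' CG C'G CC') iC).
Qed.

Lemma sum_grad_xstar : \sum_(i < n) grad i xstar = 0.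
Proof.
have fsumE : fsum f = n%:R^-1 *: \sum_(i < n) f i.
  by apply/funext => x; rewrite /fsum fct_sumE.
have grad_fsum : is_gradient (fsum f) (n%:R^-1 *: \sum_(i < n) grad i).
  by rewrite fsumE; apply/is_gradientZ/is_gradient_sum.
have /eqP := gradient_eq0_at_min grad_fsum xstar_min.
by rewrite /= fct_sumE scaler_eq0 invr_eq0 gt_eqF ?n_gt0 // => /eqP.
Qed.

Lemma is_gradient_fC C : is_gradient (fC f C) (gradC grad C).
Proof.
have -> : fC f C = #|C|%:R^-1 *: \sum_(i in C) f i by apply/funext => x; rewrite /fC fct_sumE.
have -> : gradC grad C = #|C|%:R^-1 *: \sum_(i in C) grad i.
  by apply/funext => x; rewrite /gradC /= fct_sumE.
exact/is_gradientZ/is_gradient_sum.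
Qed.

Definition sigma C := n%:R / (4 * tau%:R * L C) : R.
Definition weight C := 2 * sigma C * alpha * (n%:R * p C)^-1 ^+ 2.
Definition jac_gap (J : Jac R d n) (C : {set 'I_n}) := \sum_(i in C) (J i - grad i xstar).
Definition grad_gap (x : vec) (C : {set 'I_n}) := \sum_(i in C) (grad i x - grad i xstar).
Definition bregman (x : vec) C :=
  fC f C x - fC f C xstar - dotv (gradC grad C xstar) (x - xstar).
Definition Psi_mean (st : vec * Jac R d n) := \sum_(C in G) p C * Psi grad p L tau alpha xstar C st.

Lemma Jmean_jac_gap J : Jmean J = n%:R^-1 *: \sum_(C in G) jac_gap J C.
Proof.
rewrite /Jmean /jac_gap -(sum_by_blocks (fun i => J i - grad i xstar)).
by rewrite sumrB sum_grad_xstar subr0.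
Qed.

Lemma Jmean_sub_gradCJ J C :
  Jmean J - gradCJ grad p C J xstar = (n%:R * p C)^-1 *: jac_gap J C.
Proof.
rewrite /gradCJ opprD addrA subrr add0r -scalerN /jac_gap -sumrN.
by congr (_ *: _); apply: eq_bigr => i _; rewrite opprB.
Qed.

Lemma gradCJE J C x :
  gradCJ grad p C J x = Jmean J + (n%:R * p C)^-1 *: (grad_gap x C - jac_gap J C).
Proof.
rewrite /gradCJ /grad_gap /jac_gap -sumrB.
by congr (_ + _ *: _); apply: eq_bigr => i _; rewrite opprB addrA subrK.
Qed.

Lemma jac_gap_step x J C C' : C \in G -> C' \in G ->
  jac_gap (fun i => if i \in C' then grad i x else J i) C =
  if C == C' then grad_gap x C else jac_gap J C.
Proof.
move=> CG C'G; case: eqP => [->|/eqP CC']; first by apply: eq_bigr => i ->.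
by apply: eq_bigr => i iC; rewrite (negbTE (block_disjoint CG C'G CC' iC)).
Qed.

Lemma grad_gapE x C : C \in G -> grad_gap x C = tau%:R *: (gradC grad C x - gradC grad C xstar).
Proof.
move=> CG; rewrite /gradC G_card // -scalerBr scalerA mulfV ?gt_eqF ?tau_gt0 //.
by rewrite scale1r /grad_gap sumrB.
Qed.

Lemma PsiE C x J : Psi grad p L tau alpha xstar C (x, J) =
  sqnorm (x - xstar) + weight C * sqnorm (jac_gap J C).
Proof. by rewrite /Psi /= Jmean_sub_gradCJ sqnormZ /weight !mulrA. Qed.

Lemma Psi_meanE x J :
  Psi_mean (x, J) = sqnorm (x - xstar) + \sum_(C in G) p C * weight C * sqnorm (jac_gap J C).
Proof.
rewrite /Psi_mean; under eq_bigr do rewrite PsiE mulrDr mulrA.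
by rewrite big_split /= mean_cst.
Qed.

Lemma dotv_grad_gap_ge x C : C \in G ->
  tau%:R * (bregman x C + mu / 2 * sqnorm (x - xstar)) <= dotv (grad_gap x C) (x - xstar).
Proof.
move=> CG; rewrite grad_gapE // dotvZl; apply: ler_wpM2l; first exact: ler0n.
have := fC_strongly_convex CG xstar x; have := fC_strongly_convex CG x xstar.
by rewrite sqnormBC -opprB dotvNr dotvBl /bregman; lra.
Qed.

Lemma bregman_ge0 x C : C \in G -> 0 <= bregman x C.
Proof.
move=> CG; have := fC_strongly_convex CG xstar x.
by have := mulr_ge0 (ltW mu_gt0) (sqnorm_ge0 (x - xstar)); rewrite /bregman; lra.
Qed.

Lemma sqnorm_grad_gap_le x C : C \in G ->
  sqnorm (grad_gap x C) <= tau%:R ^+ 2 * (2 * L C * bregman x C).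
Proof.
move=> CG; rewrite grad_gapE // sqnormZ; apply: ler_wpM2l; first exact: sqr_ge0.
apply: (smooth_convex_cocoercive (is_gradient_fC C) _ _ (fC_smooth CG)) => a b.
by have := fC_strongly_convex CG a b; have := mulr_ge0 (ltW mu_gt0) (sqnorm_ge0 (b - a)); lra.
Qed.

Lemma sigma_ge0 C : C \in G -> 0 <= sigma C.
Proof.
by move=> CG; have [L_ge0 _] := fC_smooth CG; rewrite divr_ge0 ?mulr_ge0 ?ler0n.
Qed.

Lemma grad_gap_coeff_le x C : C \in G ->
  sqnorm (grad_gap x C) * (alpha + sigma C * p C) <= n%:R * p C * tau%:R * bregman x C.
Proof.
move=> CG; have [L_ge0 _] := fC_smooth CG; have pC_gt0 := p_gt0 CG.
have sigma_le : sigma C * (4 * tau%:R * L C) <= n%:R.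
  have [->|nz] := eqVneq (4 * tau%:R * L C) 0; first by rewrite mulr0 ler0n.
  by rewrite divfK.
have step_le : alpha * (4 * tau%:R * L C) <= n%:R * p C.
  have := alpha_le CG; rewrite ler_pdivlMr ?ltr_wpDr ?divr_ge0 ?mulr_ge0 ?ler0n //.
  have -> : alpha * (4 * tau%:R * L C) = alpha * (4 * L C * tau%:R / n%:R) * n%:R.
    by field; rewrite gt_eqF ?n_gt0.
  rewrite [n%:R * _]mulrC ler_pM2r ?n_gt0 // mulrDr.
  by have := mulr_ge0 (ltW alpha_gt0) (ltW mu_gt0); lra.
have coeff_le : 2 * tau%:R * L C * (alpha + sigma C * p C) <= n%:R * p C.
  by have := ler_wpM2r (ltW pC_gt0) sigma_le; nra.
have coeff_ge0 : 0 <= alpha + sigma C * p C.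
  by apply: addr_ge0; [exact: ltW | apply: mulr_ge0; [exact: sigma_ge0 | exact: ltW]].
apply: le_trans (ler_wpM2r coeff_ge0 (sqnorm_grad_gap_le x CG)) _.
have := ler_wpM2l (mulr_ge0 (ler0n _ tau) (bregman_ge0 x CG)) coeff_le.
by rewrite expr2; lra.
Qed.

(* If L C = 0 then sigma C = n / 0 = 0, so Psi_C loses its Jacobian term;
   the hypotheses then force the space to be trivial. *)
Lemma jac_gap_coeff_le0 J C : C \in G ->
  sqnorm (jac_gap J C) * (alpha - sigma C * p C + sigma C * mu * alpha) <= 0.
Proof.
move=> CG; have [L_ge0 _] := fC_smooth CG.
have [L_eq0|L_neq0] := eqVneq (L C) 0.
  have smooth0 := fC_smooth CG; rewrite L_eq0 in smooth0.
  have -> := smooth0_strongly_convex_trivial mu_gt0 smooth0 (fC_strongly_convex CG) (jac_gap J C).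
  by rewrite /sqnorm dotv0l mul0r.
have L_gt0 : 0 < L C by rewrite lt_def L_neq0.
apply: mulr_ge0_le0; first exact: sqnorm_ge0.
set X := 4 * L C * tau%:R / n%:R.
have sigmaX : sigma C * X = 1.
  by rewrite /sigma /X; field; rewrite !gt_eqF ?n_gt0 ?tau_gt0.
have X_gt0 : 0 < X by rewrite /X divr_gt0 ?mulr_gt0 ?tau_gt0 ?n_gt0.
have := alpha_le CG; rewrite -/X ler_pdivlMr ?addr_gt0 // => step_le.
have := ler_wpM2l (sigma_ge0 CG) step_le.
rewrite (_ : sigma C * (alpha * (mu + X)) = sigma C * mu * alpha + alpha * (sigma C * X)).
  by rewrite sigmaX; lra.
by ring.
Qed.

Lemma sum_block_share (r : R) : \sum_(C in G) tau%:R / n%:R * r = r.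
Proof. by rewrite -!mulr_suml sum_block_size mulfV ?mul1r ?gt_eqF ?n_gt0. Qed.

Lemma Psi_mean_step_le x J :
  \sum_(C' in G) p C' * Psi_mean (saga_step grad p alpha (x, J) C')
  <= (1 - mu * alpha) * Psi_mean (x, J).
Proof.
set e := x - xstar; set r := sqnorm e.
pose U C := sqnorm (grad_gap x C); pose D C := sqnorm (jac_gap J C).
have pk C : C \in G -> p C * (n%:R * p C)^-1 = n%:R^-1.
  by move=> CG; field; rewrite !gt_eqF ?n_gt0 ?p_gt0.
have mean_x :=
  saga_mean_sqnorm_le (fun C CG => ltW (p_gt0 CG)) p_sum1 (grad_gap x) (jac_gap J) e alpha pk.
have mean_J := @mean_update R _ G p p_sum1 (fun C => p C * weight C) U D
  (fun C' C => sqnorm (jac_gap (fun i => if i \in C' then grad i x else J i) C)).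
under eq_bigr do rewrite /= Psi_meanE mulrDr gradCJE Jmean_jac_gap addrAC -/e.
rewrite big_split /= mean_J; last first.
  by move=> C C' CG C'G; rewrite jac_gap_step //; case: eqP.
have blocks : \sum_(C in G) (tau%:R / n%:R * r
      - 2 * alpha * n%:R^-1 * (tau%:R * (bregman x C + mu / 2 * r))
      + 2 * alpha ^+ 2 * (p C * (n%:R * p C)^-1 ^+ 2 * (U C + D C))
      + p C * weight C * (p C * U C + (1 - p C) * D C))
    <= \sum_(C in G) (1 - mu * alpha) * (tau%:R / n%:R * r + p C * weight C * D C).
  apply: ler_sum => C CG; apply: block_contraction;
    [exact: alpha_gt0 | exact: p_gt0 | exact: n_gt0
    | exact: grad_gap_coeff_le | exact: jac_gap_coeff_le0].
rewrite !big_split /= sumrN sum_block_share -[\sum_(C in G) 2 * alpha ^+ 2 * _]mulr_sumr in blocks.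
have dot_le : \sum_(C in G) 2 * alpha / n%:R * (tau%:R * (bregman x C + mu / 2 * r))
    <= 2 * alpha / n%:R * \sum_(C in G) dotv (grad_gap x C) e.
  rewrite -mulr_sumr; apply: ler_wpM2l; first by rewrite divr_ge0 ?ler0n // mulr_ge0 // ltW.
  by apply: ler_sum => C CG; apply: dotv_grad_gap_ge.
have RHS : \sum_(C in G) (1 - mu * alpha) * (tau%:R / n%:R * r + p C * weight C * D C)
    = (1 - mu * alpha) * Psi_mean (x, J).
  by rewrite -mulr_sumr big_split /= sum_block_share Psi_meanE.
rewrite RHS in blocks; apply: le_trans blocks.
by move: mean_x dot_le; rewrite /U /D -/r; lra.
Qed.

Definition mean_after k (st : vec * Jac R d n) :=
  \sum_(s : k.-tuple {set 'I_n} | all (fun C => C \in G) s)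
    (\prod_(j < k) p (tnth s j)) * Psi_mean (foldl (saga_step grad p alpha) st s).

Lemma mean_after0 st : mean_after 0 st = Psi_mean st.
Proof.
rewrite /mean_after (big_pred1 [tuple]) ?big_ord0 ?mul1r //.
by move=> s; rewrite [s]tuple0 /= eqxx.
Qed.

Lemma mean_afterS k st :
  mean_after k.+1 st = \sum_(C in G) p C * mean_after k (saga_step grad p alpha st C).
Proof.
rewrite /mean_after big_tuple_cons; apply: eq_bigr => C CG.
rewrite mulr_sumr; apply: eq_bigr => s _.
by rewrite big_ord_recl tnth0 mulrA; under eq_bigr do rewrite tnthS.
Qed.

Lemma EPsiE x0 J0 k : EPsi grad G p L tau alpha xstar x0 J0 k = mean_after k (x0, J0).
Proof.
by apply: eq_bigr => s _; rewrite /Psi_mean mulr_sumr; apply: eq_bigr => C _; rewrite mulrA.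
Qed.

Lemma Psi_mean_ge0 st : 0 <= Psi_mean st.
Proof.
apply: sumr_ge0 => C CG; case: st => x J; rewrite PsiE.
apply: mulr_ge0; first exact/ltW/p_gt0.
apply: addr_ge0; first exact: sqnorm_ge0.
apply: mulr_ge0; last exact: sqnorm_ge0.
apply: mulr_ge0; last exact: sqr_ge0.
by have := sigma_ge0 CG; have := alpha_gt0; nra.
Qed.

Lemma mu_alpha_le1 : mu * alpha <= 1.
Proof.
have [C CG] := exists_block; have [L_ge0 _] := fC_smooth CG.
have X_ge0 : 0 <= 4 * L C * tau%:R / n%:R by rewrite divr_ge0 ?mulr_ge0 ?ler0n.
have p_le1 : p C <= 1.
  rewrite -p_sum1 (bigD1 C) //= lerDl sumr_ge0 // => C' /andP[C'G _].
  exact/ltW/p_gt0.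
have := alpha_le CG; rewrite ler_pdivlMr ?ltr_wpDr // mulrDr.
by have := mulr_ge0 (ltW alpha_gt0) X_ge0; lra.
Qed.

Lemma mean_after_le k st : mean_after k st <= (1 - mu * alpha) ^+ k * Psi_mean st.
Proof.
have rate_ge0 : 0 <= 1 - mu * alpha by rewrite subr_ge0 mu_alpha_le1.
elim: k st => [|k IHk] st; first by rewrite mean_after0 expr0 mul1r.
rewrite mean_afterS exprSr -mulrA.
apply: le_trans (_ : \sum_(C in G) p C * ((1 - mu * alpha) ^+ k *
    Psi_mean (saga_step grad p alpha st C)) <= _).
  by apply: ler_sum => C CG; rewrite ler_wpM2l ?IHk // ltW ?p_gt0.
under eq_bigr do rewrite mulrCA; rewrite -mulr_sumr ler_wpM2l ?exprn_ge0 //.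
by case: st => x J; apply: Psi_mean_step_le.
Qed.

Lemma EPsi_contraction x0 J0 k :
  EPsi grad G p L tau alpha xstar x0 J0 k
  <= (1 - mu * alpha) ^+ k * EPsi grad G p L tau alpha xstar x0 J0 0.
Proof. by rewrite !EPsiE mean_after0 mean_after_le. Qed.

Lemma EPsi_complexity x0 J0 (eps : R) k :
  (exists2 C, C \in G & alpha = p C / (mu + 4 * L C * tau%:R / n%:R)) -> 0 < eps ->
  (\big[Num.max/0]_(C in G) ((p C)^-1 + 4 * L C / mu * (tau%:R / (n%:R * p C))))
    * ln eps^-1 <= k%:R ->
  EPsi grad G p L tau alpha xstar x0 J0 k <= eps * EPsi grad G p L tau alpha xstar x0 J0 0.
Proof.
move=> [C CG alphaE] eps_gt0 k_ge.
apply: le_trans (EPsi_contraction x0 J0 k) _.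
rewrite ler_wpM2r // ?EPsiE ?mean_after0 ?Psi_mean_ge0 //.
apply: geometric_le_eps k_ge => //; first by rewrite mulr_gt0 ?mu_alpha_le1.
have -> : (mu * alpha)^-1 = (p C)^-1 + 4 * L C / mu * (tau%:R / (n%:R * p C)).
  rewrite alphaE; field; rewrite !gt_eqF ?p_gt0 ?n_gt0 //.
  have [L_ge0 _] := fC_smooth CG.
  by rewrite ltr_wpDr ?mulr_gt0 ?mulr_ge0 ?ler0n ?n_gt0.
exact: le_bigmax_cond.
Qed.

End MinibatchSAGA.

Unset Implicit Arguments.

Theorem theorem5p2 (R : realType) (d n tau : nat)
  (f : 'I_n -> 'rV[R]_d -> R) (grad : 'I_n -> 'rV[R]_d -> 'rV[R]_d)
  (xstar : 'rV[R]_d)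
  (G : {set {set 'I_n}}) (p L : {set 'I_n} -> R) (mu alpha : R)
  (x0 : 'rV[R]_d) (J0 : 'I_n -> 'rV[R]_d) :
  (forall i, is_gradient (f i) (grad i)) ->
  (forall x, fsum f xstar <= fsum f x) ->
  finset.partition G (finset.setT : {set 'I_n}) ->
  (forall C, C \in G -> #|C| = tau) ->
  (forall C, C \in G -> 0 < p C) ->
  \sum_(C in G) p C = 1 ->
  0 < mu ->
  (forall C, C \in G -> smooth_with (L C) (gradC grad C)) ->
  (forall C, C \in G -> strongly_convex_with mu (fC f C) (gradC grad C)) ->
  0 < alpha ->
  (* part 1: linear convergence of E[Psi_S^k] *)
  ((forall C, C \in G -> alpha <= p C / (mu + 4 * L C * tau%:R / n%:R)) ->
   forall k : nat,
     EPsi grad G p L tau alpha xstar x0 J0 k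
       <= (1 - mu * alpha) ^+ k * EPsi grad G p L tau alpha xstar x0 J0 0)
  /\
  (* part 2: iteration complexity when alpha equals the bound (the minimum) *)
  ((forall C, C \in G -> alpha <= p C / (mu + 4 * L C * tau%:R / n%:R)) ->
   (exists2 C, C \in G & alpha = p C / (mu + 4 * L C * tau%:R / n%:R)) ->
   forall (eps : R) (k : nat), 0 < eps ->
     (\big[Num.max/0]_(C in G)
        ((p C)^-1 + 4 * L C / mu * (tau%:R / (n%:R * p C)))) * ln (eps^-1)
       <= k%:R ->
     EPsi grad G p L tau alpha xstar x0 J0 k
       <= eps * EPsi grad G p L tau alpha xstar x0 J0 0).
Proof.
move=> *; split=> [alpha_le k | alpha_le alphaE eps k eps_gt0 k_ge].
  exact: EPsi_contraction.
exact: EPsi_complexity alphaE eps_gt0 k_ge.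
Qed.
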